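(* Let $(T_0,\widetilde T_0)$ be a joint pair of closed abstract Friedrichs operators on a complex Hilbert space $\mathcal{H}$, with $T_1:=\widetilde T_0^*$, $\widetilde T_1:=T_0^*$, $\mathcal{W}_0:=\operatorname{dom}T_0=\operatorname{dom}\widetilde T_0$ and $\mathcal{W}:=\operatorname{dom}T_1=\operatorname{dom}\widetilde T_1$. Define on $\mathcal{W}$ the sesquilinear form $[u\mid v]:=\langle T_1u,v\rangle-\langle u,\widetilde T_1 v\rangle$, and for $S\subseteq\mathcal{W}$ let $S^{[\perp]}:=\{u\in\mathcal{W}: [u\mid v]=0 \text{ for all } v\in S\}$. Then $$\bigl(\mathcal{W}_0\dotplus\operatorname{ker}T_1\dotplus\operatorname{ker}\widetilde T_1\bigr)^{[\perp][\perp]}=\mathcal{W}.$$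
   Context: $\mathcal{H}$ is a complex Hilbert space with inner product $\langle\cdot,\cdot\rangle$ (linear in the first argument) and norm $\|\cdot\|$. A pair $(T,\widetilde T)$ of densely defined linear operators on $\mathcal{H}$ is a joint pair of abstract Friedrichs operators if: (T1) $T$ and $\widetilde T$ have a common dense domain $\mathcal{D}$ and $\langle T\varphi,\psi\rangle=\langle\varphi,\widetilde T\psi\rangle$ for all $\varphi,\psi\in\mathcal{D}$; (T2) there is $c>0$ with $\|(T+\widetilde T)\varphi\|\le c\|\varphi\|$ for all $\varphi\in\mathcal{D}$; (T3) there is $\mu_0>0$ with $\langle (T+\widetilde T)\varphi,\varphi\rangle\ge 2\mu_0\|\varphi\|^2$ for all $\varphi\in\mathcal{D}$. A joint pair of closed abstract Friedrichs operators is such a pair $(T_0,\widetilde T_0)$ in which both operators are closed. One has $T_0\subseteq T_1$, $\widetilde T_0\subseteq\widetilde T_1$, $\operatorname{dom}T_1=\operatorname{dom}\widetilde T_1$, and the sum $\mathcal{W}_0+\operatorname{ker}T_1+\operatorname{ker}\widetilde T_1$ is direct. *)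

From HB Require Import structures.
From mathcomp Require Import all_boot all_order all_algebra.
From mathcomp Require Import complex.
From mathcomp Require Import boolp classical_sets reals.
Set Implicit Arguments. Unset Strict Implicit. Unset Printing Implicit Defensive.
Import Order.TTheory GRing.Theory Num.Theory.
Local Open Scope ring_scope.
Local Open Scope classical_set_scope.

Section Hilbert.
Variables (R : realType) (V : lmodType R[i]) (ip : V -> V -> R[i]).

Definition hnorm (x : V) : R := Num.sqrt (complex.Re (ip x x)).

Definition hcvg (u : nat -> V) (x : V) : Prop :=
  forall e : R, 0 < e -> exists N : nat, forall n, (N <= n)%N -> hnorm (u n - x) < e.

Definition hcauchy (u : nat -> V) : Prop :=
  forall e : R, 0 < e -> exists N : nat, forall m n, (N <= m)%N -> (N <= n)%N ->
    hnorm (u m - u n) < e.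

Definition is_hilbert : Prop :=
  [/\ (forall (a : R[i]) (x y z : V), ip (a *: x + y) z = a * ip x z + ip y z),
      (forall x y : V, ip y x = (ip x y)^*),
      (forall x : V, 0 <= ip x x),
      (forall x : V, ip x x = 0 -> x = 0)
    & (forall u : nat -> V, hcauchy u -> exists x, hcvg u x)].

End Hilbert.

Record op (R : realType) (V : lmodType R[i]) := Op { dom : set V; app : V -> V }.
Arguments Op {R V}.

Section Operators.
Variables (R : realType) (V : lmodType R[i]) (ip : V -> V -> R[i]).

Definition is_linop (T : op V) : Prop :=
  [/\ dom T 0,
      (forall (a : R[i]) x y, dom T x -> dom T y -> dom T (a *: x + y))
    & (forall (a : R[i]) x y, dom T x -> dom T y ->
         app T (a *: x + y) = a *: app T x + app T y)].

Definition dense (S : set V) : Prop :=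
  forall (x : V) (e : R), 0 < e -> exists2 u, S u & hnorm ip (x - u) < e.

Definition densely_defined (T : op V) : Prop := is_linop T /\ dense (dom T).

Definition closed_op (T : op V) : Prop :=
  forall (u : nat -> V) (x y : V), (forall n, dom T (u n)) ->
    hcvg ip u x -> hcvg ip (fun n => app T (u n)) y -> dom T x /\ app T x = y.

Definition is_adjoint (S T : op V) : Prop :=
  (dom S = [set v | exists w, forall u, dom T u -> ip (app T u) v = ip u w]) /\
  (forall v u, dom S v -> dom T u -> ip (app T u) v = ip u (app S v)).

Definition joint_friedrichs (T Tt : op V) : Prop :=
  [/\ densely_defined T /\ densely_defined Tt, dom T = dom Tt,
      (forall phi psi, dom T phi -> dom T psi ->
         ip (app T phi) psi = ip phi (app Tt psi)),
      (exists2 c : R, 0 < c & forall phi, dom T phi ->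
         hnorm ip (app T phi + app Tt phi) <= c * hnorm ip phi)
    & (exists2 mu0 : R, 0 < mu0 & forall phi, dom T phi ->
         (Complex (2 * mu0 * hnorm ip phi ^+ 2) 0 : R[i]) <= ip (app T phi + app Tt phi) phi)].

Definition joint_closed_friedrichs (T Tt : op V) : Prop :=
  [/\ joint_friedrichs T Tt, closed_op T & closed_op Tt].

Definition ker (T : op V) : set V := [set u | dom T u /\ app T u = 0].

Definition sum3 (A B C : set V) : set V :=
  [set x | exists a b c, [/\ A a, B b, C c & x = a + b + c]].

Definition bform (T1 Tt1 : op V) (u v : V) : R[i] :=
  ip (app T1 u) v - ip u (app Tt1 v).

Definition bperp (T1 Tt1 : op V) (S : set V) : set V :=
  [set u | dom T1 u /\ forall v, S v -> bform T1 Tt1 u v = 0].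

End Operators.

(* Write S for W0 + ker T1 + ker Tt1. Since [u | v] = 0 for u in W and v in W0,
   it suffices to show S^[perp] is contained in W0.  Let v be in S^[perp].
   Then z := T1 v is orthogonal to ker Tt1 = ker T0^*.  The operator T0 is closed
   and, by coercivity of T0 + Tt0, bounded below, so its range is closed and
   z = T0 w with w in W0; the preimage is obtained by minimising
   |T0 x|^2 - 2 Re <T0 x, z> over W0.  Now y := v - w lies in ker T1, and
   <(T0 + Tt0) p, y> = <p, Tt1 y> for p in W0, while [v | y] = 0 reads
   <y, Tt1 y> = 0.  Coercivity of the bounded operator T0 + Tt0 then forces
   y = 0, i.e. v = w is in W0. *)

From mathcomp Require Import all_boot all_order all_algebra.
From mathcomp Require Import complex.
From mathcomp Require Import boolp classical_sets reals.
From mathcomp Require Import ring lra.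
Import Order.TTheory GRing.Theory Num.Theory.
Local Open Scope ring_scope.
Local Open Scope classical_set_scope.
Set Implicit Arguments. Unset Strict Implicit. Unset Printing Implicit Defensive.

(* Unqualified [Re] would be the real part of [Num.Theory]. *)
Local Notation Re := complex.Re.
Local Notation Im := complex.Im.

Lemma ReM (R : realType) (z w : R[i]) : Re (z * w) = Re z * Re w - Im z * Im w.
Proof. by case: z; case: w. Qed.

Section RealFacts.
Variable R : realType.

Lemma le0_eps_mul (x K : R) : (forall e, 0 < e <= 1 -> x <= e * K) -> x <= 0.
Proof.
move=> h; have [K_le0|K_gt0] := lerP K 0.
  by have := h 1; rewrite ltr01 lexx mul1r => /(_ isT); lra.
rewrite leNgt; apply/negP => x_gt0.
have Kx_gt0 : 0 < K + x by rewrite addr_gt0.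
have := h (x / (K + x)); rewrite divr_gt0 // ler_pdivrMr // mul1r lerDr ltW //=.
by rewrite mulrAC ler_pdivlMr //; nra.
Qed.

Lemma eq0_quadratic_ge0 (a b : R) :
  0 <= b -> (forall t, 0 <= 2 * t * a + t ^+ 2 * b) -> a = 0.
Proof.
move=> b_ge0 h; have := h (- a / (b + 1)).
have -> : 2 * (- a / (b + 1)) * a + (- a / (b + 1)) ^+ 2 * b
          = - (a ^+ 2 * (b + 2)) / (b + 1) ^+ 2 by field; lra.
rewrite pmulr_lge0 ?invr_gt0 ?exprn_gt0 ?ltr_wpDl // oppr_ge0 => h1.
by apply/eqP; rewrite -sqrf_eq0 eq_le sqr_ge0 andbT; nra.
Qed.

Lemma invS_lt_eventually (e : R) :
  0 < e -> exists K, forall n, (K <= n)%N -> n.+1%:R^-1 < e.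
Proof.
move=> e_gt0; have [K] := ltr_add_invr e_gt0; rewrite add0r => hK.
exists K => n Kn; apply: le_lt_trans hK.
by rewrite lef_pV2 ?posrE ?ltr0Sn // ler_nat.
Qed.

End RealFacts.

Section LinearOn.
Variables (R : realType) (V : lmodType R[i]) (W : lmodType R[i]).
Variables (D : set V) (F : V -> W).
Hypothesis D0 : D 0.
Hypothesis F_lin : forall a x y, D x -> D y -> F (a *: x + y) = a *: F x + F y.

Lemma linear_on0 : F 0 = 0.
Proof.
by apply: (addrI (F 0)); rewrite addr0 -{1}[F 0]scale1r -F_lin // scale1r addr0.
Qed.

Lemma linear_onZ a x : D x -> F (a *: x) = a *: F x.
Proof. by move=> Dx; rewrite -[a *: x]addr0 F_lin // linear_on0 addr0. Qed.

Lemma linear_onB x y : D x -> D y -> F (x - y) = F x - F y.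
Proof. by move=> Dx Dy; rewrite addrC -scaleN1r F_lin // scaleN1r addrC. Qed.

End LinearOn.

Section LinearOperator.
Variables (R : realType) (V : lmodType R[i]) (T : op V).
Hypothesis T_lin : is_linop T.

Lemma linop_dom0 : dom T 0.
Proof. by case: T_lin. Qed.

Lemma linop_domZ a x : dom T x -> dom T (a *: x).
Proof. by case: T_lin => T_0 TD _ Tx; rewrite -[a *: x]addr0; apply: TD. Qed.

Lemma linop_domB x y : dom T x -> dom T y -> dom T (x - y).
Proof. by case: T_lin => _ TD _ Tx Ty; rewrite addrC -scaleN1r; apply: TD. Qed.

Lemma linop_appZ a x : dom T x -> app T (a *: x) = a *: app T x.
Proof. by case: T_lin => T_0 _ Tl; apply: linear_onZ. Qed.

Lemma linop_appB x y : dom T x -> dom T y -> app T (x - y) = app T x - app T y.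
Proof. by case: T_lin => T_0 _ Tl; apply: linear_onB. Qed.

End LinearOperator.

Section Hilbert.
Variables (R : realType) (V : lmodType R[i]) (ip : V -> V -> R[i]).
Hypothesis ipH : is_hilbert ip.

Local Notation nm := (hnorm ip).
Local Notation nm2 x := (Re (ip x x)).

Lemma ipDl x y z : ip (x + y) z = ip x z + ip y z.
Proof. by case: ipH => lin _ _ _ _; rewrite -[x]scale1r lin mul1r scale1r. Qed.

Lemma ip0l z : ip 0 z = 0.
Proof. by apply: (addrI (ip 0 z)); rewrite -ipDl !addr0. Qed.

Lemma ipZl a x z : ip (a *: x) z = a * ip x z.
Proof. by case: ipH => lin _ _ _ _; rewrite -[a *: x]addr0 lin ip0l addr0. Qed.

Lemma ipNl x z : ip (- x) z = - ip x z.
Proof. by rewrite -scaleN1r ipZl mulN1r. Qed.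

Lemma ipBl x y z : ip (x - y) z = ip x z - ip y z.
Proof. by rewrite ipDl ipNl. Qed.

Lemma ip_conj x y : ip y x = (ip x y)^*.
Proof. by case: ipH. Qed.

Lemma ipDr x y z : ip z (x + y) = ip z x + ip z y.
Proof. by rewrite ip_conj ipDl rmorphD /= -!ip_conj. Qed.

Lemma ip0r z : ip z 0 = 0.
Proof. by rewrite ip_conj ip0l rmorph0. Qed.

Lemma ipZr a x z : ip z (a *: x) = a^* * ip z x.
Proof. by rewrite ip_conj ipZl rmorphM /= -ip_conj. Qed.

Lemma ipNr x z : ip z (- x) = - ip z x.
Proof. by rewrite ip_conj ipNl rmorphN /= -ip_conj. Qed.

Lemma ipBr x y z : ip z (x - y) = ip z x - ip z y.
Proof. by rewrite ipDr ipNr. Qed.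

Lemma Re_ipC x y : Re (ip y x) = Re (ip x y).
Proof. by rewrite ip_conj; case: (ip x y). Qed.

Lemma ip_ge0 x : 0 <= ip x x.
Proof. by case: ipH. Qed.

Lemma nm2_ge0 x : 0 <= nm2 x.
Proof. by have := ip_ge0 x; rewrite lecE => /andP[]. Qed.

Lemma nm2_eq0 x : nm2 x = 0 -> x = 0.
Proof.
case: ipH => _ _ _ ip_eq0 _ h; apply: ip_eq0.
by rewrite [ip x x]complexE h (ger0_Im (ip_ge0 x)) mulr0 addr0.
Qed.

Lemma nm_ge0 x : 0 <= nm x.
Proof. exact: sqrtr_ge0. Qed.

Lemma nm_sqr x : nm x ^+ 2 = nm2 x.
Proof. by rewrite /hnorm sqr_sqrtr // nm2_ge0. Qed.

Lemma nm_eq0 x : nm x = 0 -> x = 0.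
Proof. by move=> h; apply: nm2_eq0; rewrite -nm_sqr h expr0n. Qed.

Lemma nmN x : nm (- x) = nm x.
Proof. by rewrite /hnorm ipNl ipNr opprK. Qed.

Lemma nm2DZ (t : R) x y :
  nm2 (x + (t%:C)%C *: y) = nm2 x + 2 * t * Re (ip x y) + t ^+ 2 * nm2 y.
Proof.
have conj_t : ((t%:C)%C)^* = (t%:C)%C by apply/eqP; rewrite eq_complex /= oppr0 !eqxx.
rewrite ipDl !ipDr !ipZl !ipZr conj_t !raddfD /= !ReM /= (Re_ipC x y).
by rewrite (ger0_Im (ip_ge0 y)); lra.
Qed.

Lemma nm2Z (t : R) x : nm2 ((t%:C)%C *: x) = t ^+ 2 * nm2 x.
Proof. by have := nm2DZ t 0 x; rewrite add0r !ip0l /=; lra. Qed.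

Lemma nm2D x y : nm2 (x + y) = nm2 x + 2 * Re (ip x y) + nm2 y.
Proof. by have := nm2DZ 1 x y; rewrite scale1r expr1n mul1r mulr1. Qed.

Lemma Re_ip_sqr_le x y : Re (ip x y) ^+ 2 <= nm2 x * nm2 y.
Proof.
have [->|y_neq0] := eqVneq y 0; first by rewrite ip0r expr0n /= mulr_ge0 ?nm2_ge0.
have y_gt0 : 0 < nm2 y.
  by rewrite lt_def nm2_ge0 andbT; apply: contra_neq y_neq0; apply: nm2_eq0.
set a := Re (ip x y).
have := nm2_ge0 (x + (- a / nm2 y)%:C%C *: y); rewrite nm2DZ.
have -> : nm2 x + 2 * (- a / nm2 y) * a + (- a / nm2 y) ^+ 2 * nm2 y
          = nm2 x - a ^+ 2 / nm2 y by field; apply: lt0r_neq0.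
by rewrite subr_ge0 ler_pdivrMr.
Qed.

Lemma Re_ip_norm_le x y : `|Re (ip x y)| <= nm x * nm y.
Proof.
rewrite -sqrtr_sqr /hnorm -sqrtrM ?nm2_ge0 //.
by rewrite ler_sqrt ?mulr_ge0 ?nm2_ge0 // Re_ip_sqr_le.
Qed.

Lemma Re_ip_le x y : Re (ip x y) <= nm x * nm y.
Proof. exact: le_trans (ler_norm _) (Re_ip_norm_le x y). Qed.

Lemma ler_nmD x y : nm (x + y) <= nm x + nm y.
Proof.
rewrite -(ler_pXn2r (n := 2)) ?nnegrE ?addr_ge0 ?nm_ge0 //.
by rewrite nm_sqr nm2D sqrrD !nm_sqr; have := Re_ip_le x y; lra.
Qed.

Lemma nm2_parallelogram x y : nm2 (x - y) + nm2 (x + y) = 2 * nm2 x + 2 * nm2 y.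
Proof. by rewrite !nm2D ipNr raddfN ipNl ipNr opprK; lra. Qed.


Lemma hcvg_Re_ip u g p : hcvg ip u g -> forall e, 0 < e ->
  exists K, forall n, (K <= n)%N -> `|Re (ip (u n) p) - Re (ip g p)| < e.
Proof.
move=> ug e e_gt0; have p1_gt0 : 0 < nm p + 1 by have := nm_ge0 p; lra.
have [K hK] := ug _ (divr_gt0 e_gt0 p1_gt0).
exists K => n /hK; rewrite ltr_pdivlMr // => small.
rewrite -raddfB -ipBl; apply: le_lt_trans (Re_ip_norm_le _ _) _.
by have := nm_ge0 (u n - g); have := nm_ge0 p; nra.
Qed.

Section RieszRange.
Variables (T : op V) (f : V -> R[i]) (M : R).
Hypothesis T_lin : is_linop T.
Hypothesis f_lin : forall a x y, dom T x -> dom T y ->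
  f (a *: x + y) = a * f x + f y.
Hypothesis f_bound : forall x, dom T x -> Re (f x) <= M * nm (app T x).

Let TD a x y : dom T x -> dom T y -> dom T (a *: x + y).
Proof. by case: T_lin => _ TD _; apply: TD. Qed.
Let T_app a x y : dom T x -> dom T y -> app T (a *: x + y) = a *: app T x + app T y.
Proof. by case: T_lin => _ _ Tl; apply: Tl. Qed.
Let fZ a x : dom T x -> f (a *: x) = a * f x.
Proof. exact: (@linear_onZ _ _ R[i]^o _ f (linop_dom0 T_lin) f_lin a x). Qed.

Let J x := nm2 (app T x) - 2 * Re (f x).
Let d := inf [set J x | x in dom T].

Lemma energy_lb x : dom T x -> - M ^+ 2 <= J x.
Proof.
move=> Tx; rewrite /J -nm_sqr; have := f_bound Tx.
by have := sqr_ge0 (nm (app T x) - M); nra.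
Qed.

Lemma energy_has_inf : has_inf [set J x | x in dom T].
Proof.
split; first by exists (J 0), 0; first exact: linop_dom0.
by exists (- M ^+ 2) => _ [y Ty <-]; apply: energy_lb.
Qed.

Lemma inf_energy_le x : dom T x -> d <= J x.
Proof. by move=> Tx; apply: (ge_inf energy_has_inf.2); exists x. Qed.

Lemma energy_shift (t : R) p x : dom T p -> dom T x ->
  J ((t%:C)%C *: p + x) = J x + 2 * t * (Re (ip (app T x) (app T p)) - Re (f p))
                          + t ^+ 2 * nm2 (app T p).
Proof.
move=> Tp Tx; rewrite /J T_app // f_lin // [_ *: _ + _]addrC nm2DZ raddfD /= ReM /=; lra.
Qed.

Lemma energy_parallelogram x y : dom T x -> dom T y ->
  nm2 (app T x - app T y) <= 2 * J x + 2 * J y - 4 * d.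
Proof.
move=> Tx Ty; pose h := ((2^-1 : R)%:C)%C.
have hTy := linop_domZ T_lin h Ty.
have := inf_energy_le (TD h Tx hTy).
rewrite /J (T_app _ Tx hTy) (f_lin _ Tx hTy) linop_appZ // fZ // -scalerDr nm2Z.
have := nm2_parallelogram (app T x) (app T y).
by rewrite raddfD /= !ReM /=; lra.
Qed.

Lemma exists_minimizing_seq : exists2 u : nat -> V, forall n, dom T (u n) &
  forall e, 0 < e -> exists K, forall n, (K <= n)%N -> J (u n) < d + e.
Proof.
have /choice[u hu] : forall n, exists x, dom T x /\ J x < d + n.+1%:R^-1.
  move=> n; have eps_gt0 : 0 < n.+1%:R^-1 :> R by rewrite invr_gt0.
  by have [_ [x Tx <-] ?] := inf_adherent eps_gt0 energy_has_inf; exists x.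
exists u => [n | e e_gt0]; first by case: (hu n).
have [K hK] := invS_lt_eventually e_gt0.
by exists K => n /hK Kn; case: (hu n) => _ /lt_trans; apply; rewrite ltrD2l.
Qed.

Section MinimizingSequence.
Variable u : nat -> V.
Hypothesis u_dom : forall n, dom T (u n).
Hypothesis u_min : forall e, 0 < e -> exists K, forall n, (K <= n)%N -> J (u n) < d + e.

Lemma minimizing_cauchy : hcauchy ip (app T \o u).
Proof.
move=> e e_gt0; have e2_gt0 : 0 < e ^+ 2 / 4 by rewrite divr_gt0 ?exprn_gt0.
have [K hK] := u_min e2_gt0.
exists K => m n Km Kn /=.
rewrite -(ltr_pXn2r (n := 2)) ?nnegrE ?nm_ge0 ?ltW // nm_sqr.
have := energy_parallelogram (u_dom m) (u_dom n); have := hK _ Km; have := hK _ Kn.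
lra.
Qed.

Lemma minimizing_limit_rep g : hcvg ip (app T \o u) g ->
  forall p, dom T p -> ip (app T p) g = f p.
Proof.
move=> ug.
have Re_rep p : dom T p -> Re (ip (app T p) g) = Re (f p).
  move=> Tp; apply/eqP; rewrite -subr_eq0; apply/eqP.
  apply: (eq0_quadratic_ge0 (nm2_ge0 (app T p))) => t.
  rewrite -oppr_le0; apply: (le0_eps_mul (K := 1 + 2 * `|t|)) => e /andP[e_gt0 _].
  have [K1 hK1] := u_min e_gt0.
  have [K2 hK2] := hcvg_Re_ip (app T p) ug e_gt0.
  pose n := maxn K1 K2.
  (* the quadratic in t comes from d <= J (t p + u n) *)
  have := inf_energy_le (TD (t%:C)%C Tp (u_dom n)); rewrite energy_shift //.
  have := hK1 n (leq_maxl _ _); have := hK2 n (leq_maxr _ _).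
  rewrite /= (Re_ipC g) => close.
  have : `|t * (Re (ip (app T (u n)) (app T p)) - Re (ip g (app T p)))| <= `|t| * e.
    by rewrite normrM ler_wpM2l // ltW.
  by rewrite ler_norml => /andP[]; have := normr_ge0 t; lra.
move=> p Tp; apply/eqP; rewrite eq_complex Re_rep //= eqxx /=.
(* the imaginary parts are the real parts at 'i p *)
have := Re_rep _ (linop_domZ T_lin 'i%C Tp); rewrite linop_appZ // fZ // ipZl.
by rewrite ![('i%C * _)]mulrC !ReiNIm => /oppr_inj ->.
Qed.

End MinimizingSequence.

Lemma riesz_on_range : exists u g, [/\ forall n, dom T (u n),
  hcauchy ip (app T \o u), hcvg ip (app T \o u) g
  & forall p, dom T p -> ip (app T p) g = f p].
Proof.
have [u u_dom u_min] := exists_minimizing_seq.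
have u_cauchy := minimizing_cauchy u_dom u_min.
have [g ug] : exists g, hcvg ip (app T \o u) g by case: ipH => _ _ _ _; apply.
by exists u, g; split=> //; apply: minimizing_limit_rep ug.
Qed.

End RieszRange.

Lemma dense_orth_eq0 (D : set V) z :
  dense ip D -> (forall u, D u -> ip u z = 0) -> z = 0.
Proof.
move=> D_dense z_orth; apply: nm2_eq0; apply/eqP; rewrite eq_le nm2_ge0 andbT.
apply: (le0_eps_mul (K := nm z)) => e /andP[e_gt0 _].
have [u Du zu] := D_dense z e e_gt0.
have -> : nm2 z = Re (ip (z - u) z) by rewrite ipBl (z_orth u Du) subr0.
by apply: le_trans (Re_ip_le _ _) _; rewrite ler_wpM2r ?nm_ge0 // ltW.
Qed.

Lemma in_adjoint (S T : op V) v w : is_adjoint ip S T -> dense ip (dom T) ->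
  (forall u, dom T u -> ip (app T u) v = ip u w) -> dom S v /\ app S v = w.
Proof.
case=> S_dom S_app T_dense vw; have Sv : dom S v by rewrite S_dom; exists w.
split=> //; apply/eqP; rewrite -subr_eq0; apply/eqP.
by apply: (dense_orth_eq0 T_dense) => u Tu; rewrite ipBr -S_app // vw // subrr.
Qed.

Lemma cauchy_bounded_below (T : op V) (mu : R) (u : nat -> V) :
  is_linop T -> 0 < mu -> (forall p, dom T p -> mu * nm p <= nm (app T p)) ->
  (forall n, dom T (u n)) -> hcauchy ip (app T \o u) -> hcauchy ip u.
Proof.
move=> T_lin mu_gt0 T_below Tu Tu_cauchy e e_gt0.
have [K hK] := Tu_cauchy _ (mulr_gt0 mu_gt0 e_gt0).
exists K => m n Km Kn; rewrite -(ltr_pM2l mu_gt0).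
apply: le_lt_trans (T_below _ (linop_domB T_lin (Tu m) (Tu n))) _.
by rewrite linop_appB //; apply: hK.
Qed.

Lemma coercive_isotropic_eq0 (D : set V) (A : V -> V) (c mu : R) y h :
  dense ip D -> 0 <= c -> 0 < mu ->
  (forall p, D p -> nm (A p) <= c * nm p) ->
  (forall p, D p -> 2 * mu * nm2 p <= Re (ip (A p) p)) ->
  (forall p, D p -> ip (A p) y = ip p h) -> ip y h = 0 -> y = 0.
Proof.
move=> D_dense c_ge0 mu_gt0 A_bound A_coer Ay yh; apply: nm_eq0.
suff : mu * nm y ^+ 2 <= 0.
  by rewrite pmulr_rle0 // => ?; apply/eqP; rewrite -sqrf_eq0 eq_le sqr_ge0 andbT.
apply: (le0_eps_mul (K := nm h + c * nm y + c + 2 * mu)) => e /andP[e_gt0 e_le1].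
have [p Dp yp] := D_dense y e e_gt0.
have p_small : 2 * mu * nm p ^+ 2 <= e * (nm h + c * nm p).
  rewrite nm_sqr; apply: le_trans (A_coer p Dp) _.
  have -> : ip (A p) p = ip (y - p) (- h) - ip (A p) (y - p).
    by rewrite ipBr Ay // ipNr ipBl yh; ring.
  have yp_h : nm (y - p) * nm h <= e * nm h by rewrite ler_wpM2r ?nm_ge0 ?ltW.
  have Ap_yp : nm (A p) * nm (y - p) <= c * nm p * e.
    by apply: ler_pM; [exact: nm_ge0 | exact: nm_ge0 | exact: A_bound | exact: ltW].
  have := Re_ip_le (y - p) (- h); have := Re_ip_norm_le (A p) (y - p).
  by rewrite raddfB /= nmN ler_norml => /andP[+ _]; lra.
have y_le : nm y <= nm p + e by have := ler_nmD p (y - p); rewrite addrC subrK; lra.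
have p_le : nm p <= nm y + e.
  by have := ler_nmD y (p - y); rewrite addrC subrK -(opprB y p) nmN; lra.
have y2_le : nm y ^+ 2 <= 2 * nm p ^+ 2 + 2 * e ^+ 2.
  have : nm y ^+ 2 <= (nm p + e) ^+ 2.
    by rewrite ler_pXn2r // ?nnegrE ?addr_ge0 ?nm_ge0 ?(ltW e_gt0).
  by have := sqr_ge0 (nm p - e); lra.
have e2_le : e ^+ 2 <= e by nra.
have cep_le : 0 <= c * e * (nm y + e - nm p).
  by rewrite mulr_ge0 ?mulr_ge0 ?(ltW e_gt0) //; lra.
have := nm_ge0 h; nra.
Qed.

Lemma adjoint_ker0 (S T : op V) : is_adjoint ip S T -> dense ip (dom T) -> ker S 0.
Proof. by move=> adj T_dense; apply: (in_adjoint adj T_dense) => *; rewrite !ip0r. Qed.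

Section FriedrichsPair.
Variables (T0 Tt0 T1 Tt1 : op V) (c mu : R).
Hypothesis T0_lin : is_linop T0.
Hypothesis T0_dense : dense ip (dom T0).
Hypothesis dom_Tt0 : dom T0 = dom Tt0.
Hypothesis T0_Tt0 : forall phi psi, dom T0 phi -> dom T0 psi ->
  ip (app T0 phi) psi = ip phi (app Tt0 psi).
Hypothesis c_gt0 : 0 < c.
Hypothesis sum_bound : forall phi, dom T0 phi ->
  nm (app T0 phi + app Tt0 phi) <= c * nm phi.
Hypothesis mu_gt0 : 0 < mu.
Hypothesis sum_coercive : forall phi, dom T0 phi ->
  (Complex (2 * mu * nm phi ^+ 2) 0 : R[i]) <= ip (app T0 phi + app Tt0 phi) phi.
Hypothesis T0_closed : closed_op ip T0.
Hypothesis T1_adj : is_adjoint ip T1 Tt0.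
Hypothesis Tt1_adj : is_adjoint ip Tt1 T0.

Local Notation S := (sum3 (dom T0) (ker T1) (ker Tt1)).

Let Tt0_dense : dense ip (dom Tt0). Proof. by rewrite -dom_Tt0. Qed.

Lemma T0_sub_T1 w : dom T0 w -> dom T1 w /\ app T1 w = app T0 w.
Proof.
move=> T0w; apply: (in_adjoint T1_adj Tt0_dense) => u; rewrite -dom_Tt0 => T0u.
by rewrite ip_conj -T0_Tt0 // -ip_conj.
Qed.

Lemma Tt0_sub_Tt1 v : dom T0 v -> dom Tt1 v /\ app Tt1 v = app Tt0 v.
Proof. by move=> T0v; apply: (in_adjoint Tt1_adj T0_dense) => u T0u; apply: T0_Tt0. Qed.

Lemma sum3_ker_T1 y : ker T1 y -> S y.
Proof.
move=> y_ker; exists 0, y, 0; split; rewrite ?addr0 ?add0r //.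
  exact: linop_dom0.
exact: adjoint_ker0 Tt1_adj T0_dense.
Qed.

Lemma sum3_ker_Tt1 k : ker Tt1 k -> S k.
Proof.
move=> k_ker; exists 0, 0, k; split; rewrite ?add0r //.
  exact: linop_dom0.
exact: adjoint_ker0 T1_adj Tt0_dense.
Qed.

Lemma sum_coercive_Re p : dom T0 p ->
  2 * mu * nm2 p <= Re (ip (app T0 p + app Tt0 p) p).
Proof. by move=> T0p; have := sum_coercive T0p; rewrite lecE -nm_sqr => /andP[]. Qed.

Lemma T0_bounded_below p : dom T0 p -> mu * nm p <= nm (app T0 p).
Proof.
move=> T0p; have := sum_coercive_Re T0p.
rewrite ipDl raddfD /= (Re_ipC p (app Tt0 p)) -T0_Tt0 // -nm_sqr => coer.
have [->|p_neq0] := eqVneq (nm p) 0; first by rewrite mulr0 nm_ge0.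
have p_gt0 : 0 < nm p by rewrite lt_def p_neq0 nm_ge0.
by rewrite -(ler_pM2r p_gt0); have := Re_ip_le (app T0 p) p; lra.
Qed.

Lemma orth_ker_Tt1_in_range z : (forall k, ker Tt1 k -> ip z k = 0) ->
  exists2 w, dom T0 w & app T0 w = z.
Proof.
move=> z_orth.
have f_lin a x y : dom T0 x -> dom T0 y ->
    ip (app T0 (a *: x + y)) z = a * ip (app T0 x) z + ip (app T0 y) z.
  by move=> T0x T0y; case: T0_lin => _ _ ->; rewrite // ipDl ipZl.
have f_bound x : dom T0 x -> Re (ip (app T0 x) z) <= nm z * nm (app T0 x).
  by move=> _; rewrite mulrC Re_ip_le.
have [u [g [T0u T0u_cauchy T0u_g g_rep]]] := riesz_on_range T0_lin f_lin f_bound.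
have [w uw] : exists w, hcvg ip u w.
  case: ipH => _ _ _ _; apply.
  exact: cauchy_bounded_below T0_lin mu_gt0 T0_bounded_below T0u T0u_cauchy.
have [T0w T0w_g] := T0_closed T0u uw T0u_g.
have zg_orth p : dom T0 p -> ip (app T0 p) (z - g) = 0.
  by move=> T0p; rewrite ipBr g_rep // subrr.
have zg_ker : ker Tt1 (z - g).
  by apply: (in_adjoint Tt1_adj T0_dense) => p T0p; rewrite zg_orth // ip0r.
have : nm2 (z - g) = 0 by rewrite ipBl z_orth // -{1}T0w_g zg_orth // subrr.
by move/nm2_eq0/eqP; rewrite subr_eq0 -T0w_g => /eqP ->; exists w.
Qed.

Lemma ker_T1_orth_Tt0 y p : ker T1 y -> dom T0 p -> ip (app Tt0 p) y = 0.
Proof.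
by case=> T1y T1y0 T0p; rewrite (T1_adj.2 y p T1y) ?T1y0 ?ip0r // -dom_Tt0.
Qed.

Lemma ker_T1_sub_dom_Tt1 y : ker T1 y -> dom Tt1 y.
Proof.
move=> y_ker; have id_lin : is_linop (Op (dom T0) id).
  by case: T0_lin => T0_0 T0_D _; split.
have f_lin a x x' : dom T0 x -> dom T0 x' ->
    ip (app T0 (a *: x + x')) y = a * ip (app T0 x) y + ip (app T0 x') y.
  by move=> T0x T0x'; case: T0_lin => _ _ ->; rewrite // ipDl ipZl.
have f_bound x : dom T0 x ->
    Re (ip (app T0 x) y) <= c * nm y * nm (app (Op (dom T0) id) x).
  move=> T0x; rewrite -[ip _ y]addr0 -(ker_T1_orth_Tt0 y_ker T0x) -ipDl /=.
  apply: le_trans (Re_ip_le _ _) _.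
  by rewrite mulrAC ler_wpM2r ?nm_ge0 ?sum_bound.
have [_ [g [_ _ _ g_rep]]] := riesz_on_range id_lin f_lin f_bound.
by rewrite Tt1_adj.1; exists g => p T0p; rewrite -g_rep.
Qed.

Lemma ker_T1_isotropic_eq0 y : ker T1 y -> ip y (app Tt1 y) = 0 -> y = 0.
Proof.
move=> y_ker.
apply: (coercive_isotropic_eq0 T0_dense (ltW c_gt0) mu_gt0 sum_bound sum_coercive_Re).
move=> p T0p; rewrite ipDl ker_T1_orth_Tt0 // addr0.
exact: Tt1_adj.2 (ker_T1_sub_dom_Tt1 y_ker) T0p.
Qed.

Lemma bperp_sum3_sub_dom_T0 v : bperp ip T1 Tt1 S v -> dom T0 v.
Proof.
case=> T1v v_perp.
have [w T0w T0w_v] : exists2 w, dom T0 w & app T0 w = app T1 v.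
  apply: orth_ker_Tt1_in_range => k k_ker.
  by have := v_perp k (sum3_ker_Tt1 k_ker); rewrite /bform k_ker.2 ip0r subr0.
have [T1w T1w_w] := T0_sub_T1 T0w.
have y_ker : ker T1 (v - w).
  apply: (in_adjoint T1_adj Tt0_dense) => q Tt0q.
  by rewrite ipBr !(T1_adj.2 _ q) // T1w_w T0w_v subrr ip0r.
suff /eqP : v - w = 0 by rewrite subr_eq0 => /eqP ->.
apply: ker_T1_isotropic_eq0 => //.
have := v_perp _ (sum3_ker_T1 y_ker); rewrite /bform -T0w_v.
rewrite (Tt1_adj.2 _ _ (ker_T1_sub_dom_Tt1 y_ker) T0w) => wv.
by apply/eqP; rewrite ipBl -oppr_eq0 opprB wv.
Qed.

Lemma bform_dom_T0_r u v : dom T1 u -> dom T0 v -> bform ip T1 Tt1 u v = 0.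
Proof.
move=> T1u T0v; rewrite /bform (Tt0_sub_Tt1 T0v).2 ip_conj.
by rewrite -(T1_adj.2 u v T1u) -?dom_Tt0 // -ip_conj subrr.
Qed.

Lemma bperp_bperp_sum3 : bperp ip T1 Tt1 (bperp ip T1 Tt1 S) = dom T1.
Proof.
rewrite eqEsubset; split=> [u [] // | u T1u]; split=> // v /bperp_sum3_sub_dom_T0.
exact: bform_dom_T0_r.
Qed.

End FriedrichsPair.

End Hilbert.

Theorem lemma3p7 (R : realType) (V : lmodType R[i]) (ip : V -> V -> R[i])
  (T0 Tt0 T1 Tt1 : op V) :
  is_hilbert ip ->
  joint_closed_friedrichs ip T0 Tt0 ->
  is_adjoint ip T1 Tt0 ->
  is_adjoint ip Tt1 T0 ->
  bperp ip T1 Tt1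
    (bperp ip T1 Tt1 (sum3 (dom T0) (ker T1) (ker Tt1))) = dom T1.
Proof.
move=> ipH [[[[T0_lin T0_dense] _] dom_Tt0 T0_Tt0 [c c_gt0 bound] [mu mu_gt0 coer]]].
move=> T0_closed _ T1_adj Tt1_adj.
exact: (bperp_bperp_sum3 ipH T0_lin T0_dense dom_Tt0 T0_Tt0 c_gt0 bound mu_gt0 coer
  T0_closed T1_adj Tt1_adj).
Qed.
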